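(* For all integers $n\ge 3$ and $0\le r\le n$, $$N_0^{n,r}=\frac{2}{n-1}\binom{n-1}{r}\binom{n-1}{n-r}\quad\text{and}\quad N_1^{n,r}=2N_0^{n,r}.$$
   Context: A lattice path from $(0,0)$ to $(r,n-r)$ (with integers $n\ge 1$, $0\le r\le n$) is a sequence of lattice points $v_0=(0,0),v_1,\dots,v_n=(r,n-r)$ with each step $v_i-v_{i-1}\in\{(1,0),(0,1)\}$ (an E step or an N step); its vertex set is $\{v_0,\dots,v_n\}$. For $k\ge 0$, $N_k^{n,r}$ denotes the number of ordered pairs $(P,Q)$ of lattice paths from $(0,0)$ to $(r,n-r)$ such that the intersection of their vertex sets, with the two points $(0,0)$ and $(r,n-r)$ removed, has exactly $k$ elements. Binomial coefficients $\binom{a}{b}$ with $a\ge 0$ are $0$ if $b<0$ or $b>a$. *)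

From mathcomp Require Import all_boot all_order all_algebra.
Set Implicit Arguments. Unset Strict Implicit. Unset Printing Implicit Defensive.

(* A lattice path with n steps is encoded by its step sequence:
   true = E step (1,0), false = N step (0,1). *)

Definition vertex (s : seq bool) (i : nat) : nat * nat :=
  (count id (take i s), i - count id (take i s)).

Definition vertices (s : seq bool) : seq (nat * nat) :=
  [seq vertex s i | i <- iota 0 (size s).+1].

(* s is a lattice path from (0,0) to (r, n-r) (it has n steps, r of them E). *)
Definition is_lpath (n r : nat) (s : n.-tuple bool) : bool :=
  count id s == r.

Definition common_inner (n r : nat) (P Q : seq bool) : nat :=
  size (undup [seq v <- vertices P |
                 (v \in vertices Q) && (v != (0, 0)) && (v != (r, n - r))]).

Definition Nk (k n r : nat) : nat :=
  #|[set PQ : n.-tuple bool * n.-tuple bool |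
      [&& is_lpath r PQ.1, is_lpath r PQ.2 & common_inner n r PQ.1 PQ.2 == k]]|.

(* Record a pair of lattice paths with the same number of steps by the numbers
   a and b of E steps of its two endpoints; the paths share their i-th vertex
   exactly when their first i steps contain equally many E steps.  Let
   S_k(L; a, b) count the pairs of L-step paths with endpoints a, b that share
   exactly k of the vertices v_1, ..., v_L.  Splitting off the last step gives
   S_k(L+1; a, b) = T S_k(L) (a, b) for a <> b and
   S_{k+1}(L+1; a, a) = T S_k(L) (a, a), where T sums over the four possible
   predecessor endpoints.  The reflection principle (a 2x2 LGV determinant)
   solves this for k = 0, an explicit binomial combination for k = 1, and
   N_k^{n,r} = S_{k+1}(n; r, r).  On the diagonal this gives
   N_0 = 2 (C(n-2,r-1)^2 - C(n-2,r) C(n-2,r-2)), a Narayana number, and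
   N_1 = 2 N_0. *)

From mathcomp Require Import all_boot all_order all_algebra.
From mathcomp Require Import ring zify.
Import Order.TTheory GRing.Theory Num.Theory.
Local Open Scope ring_scope.

Lemma succz_sub1 (j : nat) : j.+1%:Z - 1 = j.
Proof. by rewrite -addn1 PoszD addrK. Qed.

Definition binz (m : nat) (k : int) : int :=
  if 0 <= k then ('C(m, `|k|%N))%:Z else 0.

Lemma binz_neg m k : k < 0 -> binz m k = 0.
Proof. by rewrite /binz; case: ifP => //; lia. Qed.

Lemma binz_nat m (j : nat) : binz m j = ('C(m, j))%:Z.
Proof. by []. Qed.

Lemma binz0 k : binz 0 k = (k == 0)%:R.
Proof. by case: k => [[|j]|j]; rewrite /binz //= bin0. Qed.

Lemma binzS m k : binz m.+1 k = binz m k + binz m (k - 1).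
Proof.
case: k => [[|j]|j].
- by rewrite /binz /= !bin0.
- by rewrite succz_sub1 /binz /= binS PoszD addrC.
- by rewrite !binz_neg // NegzE; lia.
Qed.

Lemma bin_sub_binz m r :
  (r <= m.+2)%N -> ('C(m.+1, m.+2 - r))%:Z = binz m.+1 (r%:Z - 1).
Proof.
case: r => [|j] hj; first by rewrite binz_neg // bin_small.
by rewrite subSS bin_sub // succz_sub1.
Qed.

(* Lindstrom-Gessel-Viennot: for b < a, the number of non-meeting pairs of
   m-step paths from (1,0) and (0,1) to endpoints with a and b E steps. *)
Definition lgv (m : nat) (a b : int) : int :=
  binz m (a - 1) * binz m b - binz m a * binz m (b - 1).

(* With x, u, w read as C(j+p, j), C(j+p, j+1), C(j+p, j-1), the hypotheses
   are the ratios of neighbouring binomials; after multiplying by (j+1)(p+1)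
   both sides become the same multiple of x^2. *)
Lemma narayana_cross (R : numDomainType) (j p : nat) (x u w : R) :
  j.+1%:R * u = p%:R * x -> j%:R * x = p.+1%:R * w ->
  (j + p).+1%:R * (x * x - u * w) = (u + x) * (x + w).
Proof.
move=> ux xw; have jp_neq0 : (j.+1 * p.+1)%:R != 0 :> R by rewrite pnatr_eq0.
apply: (mulIf jp_neq0); rewrite natrM.
transitivity ((j + p).+1%:R *
    (j.+1%:R * p.+1%:R * x * x - (j.+1%:R * u) * (p.+1%:R * w)) : R); first by ring.
transitivity ((j.+1%:R * u + j.+1%:R * x) * (p.+1%:R * x + p.+1%:R * w) : R);
  last by ring.
by rewrite ux -xw; ring.
Qed.

Lemma lgv_narayana m a :
  m.+1%:R * lgv m a (a - 1) = binz m.+1 a * binz m.+1 (a - 1).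
Proof.
have [a_le0 | a_gt0] := lerP a 0.
  have a1_lt0 : a - 1 < 0 by lia.
  have a2_lt0 : a - 1 - 1 < 0 by lia.
  by rewrite /lgv !(binz_neg _ _ a1_lt0) (binz_neg _ _ a2_lt0) !(mulr0, mul0r, subr0).
have [j ->] : exists j : nat, a = j.+1 by exists (`|a| - 1)%N; lia.
rewrite /lgv !binzS succz_sub1 !binz_nat.
have [j_le_m | m_lt_j] := leqP j m; last by rewrite !bin_small //; [ring | lia].
rewrite -{1}(subnKC j_le_m); apply: narayana_cross; rewrite !natz.
  by rewrite -!PoszM mul_bin_left.
case: j j_le_m => [|j] j_le_m; first by rewrite mul0r binz_neg ?mulr0.
by rewrite /binz /= -!PoszM mul_bin_left subn1 /=; congr (Posz (_ * _)); lia.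
Qed.

Definition prev_sum (f : int -> int -> int) (a b : int) : int :=
  f a b + f a (b - 1) + f (a - 1) b + f (a - 1) (b - 1).

Definition npairs (m : nat) (a b : int) : int := binz m a * binz m b.

Lemma npairsS m a b : npairs m.+1 a b = prev_sum (npairs m) a b.
Proof. by rewrite /npairs /prev_sum !binzS; ring. Qed.

Lemma npairs0 (a b : int) : a != b -> npairs 0 a b = 0.
Proof.
move=> ab; rewrite /npairs !binz0.
have [a0 | _] := eqVneq a 0; last by rewrite mul0r.
by move: ab; rewrite a0 eq_sym => /negbTE ->; rewrite mulr0.
Qed.

Lemma lgvS m a b : lgv m.+1 a b = prev_sum (lgv m) a b.
Proof. by rewrite /lgv /prev_sum !binzS; ring. Qed.

Lemma lgv_diag m a : lgv m a a = 0.
Proof. by rewrite /lgv; ring. Qed.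

Definition nonmeet_form L (a b : int) : int :=
  if L is L'.+1 then (if b <= a then lgv L' a b else - lgv L' a b)
  else ((a == 0) && (b == 0))%:R.

Lemma nonmeet_form_ge L (a b : int) :
  b <= a -> nonmeet_form L.+1 a b = lgv L a b.
Proof. by move=> ba; rewrite /= ba. Qed.

Lemma nonmeet_form_le L (a b : int) :
  a <= b -> nonmeet_form L.+1 a b = - lgv L a b.
Proof.
rewrite /= => ab; case: ifP => // ba.
have -> : a = b by apply/eqP; rewrite eq_le ab ba.
by rewrite lgv_diag oppr0.
Qed.

Lemma nonmeet_formS L (a b : int) :
  a != b -> nonmeet_form L.+1 a b = prev_sum (nonmeet_form L) a b.
Proof.
move=> ab; case: L => [|L].
  rewrite /prev_sum /= /lgv !binz0.
  by move: ab; case: (a =P 0); case: (b =P 0); case: (a - 1 =P 0); case: (b - 1 =P 0);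
    case: ifP => /=; lia.
rewrite /prev_sum; move: ab; rewrite neq_lt => /orP[] lt_ab.
  by rewrite !nonmeet_form_le; [rewrite lgvS /prev_sum; ring | lia..].
by rewrite !nonmeet_form_ge; [exact: lgvS | lia..].
Qed.

Lemma nonmeet_form_diag L (a : int) : nonmeet_form L.+1 a a = 0.
Proof. by rewrite nonmeet_form_ge // lgv_diag. Qed.

Lemma prev_sum_nonmeet_form_diag L (a : int) :
  prev_sum (nonmeet_form L.+1) a a = 2 * lgv L a (a - 1).
Proof.
rewrite /prev_sum !nonmeet_form_diag nonmeet_form_ge; last lia.
by rewrite nonmeet_form_le; [rewrite /lgv; ring | lia].
Qed.

(* Found by solving the recurrence for S_1 (see once_form); here it is only
   verified. *)
Definition once_corr L (a b : int) : int :=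
  match L with
  | 0 => 0
  | 1 => 2 * npairs 0 a b + 2 * npairs 0 (a - 1) (b - 1)
  | L'.+2 => 2 * npairs L'.+1 a b + 2 * npairs L'.+1 (a - 1) (b - 1)
             - npairs L' a b + 2 * npairs L' (a - 1) (b - 1)
             - npairs L' (a - 1 - 1) (b - 1 - 1)
  end.

Lemma once_corrSSS L (a b : int) :
  once_corr L.+3 a b = prev_sum (once_corr L.+2) a b.
Proof. by rewrite /prev_sum /= !npairsS /prev_sum !npairsS /prev_sum; ring. Qed.

Lemma once_corrS L (a b : int) :
  a != b -> once_corr L.+1 a b = prev_sum (once_corr L) a b.
Proof.
move=> ab; case: L => [|[|L]]; last exact: once_corrSSS.
- by rewrite /prev_sum /= (npairs0 _ _ ab) npairs0 ?mulr0 ?addr0 //; lia.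
- rewrite /= (npairs0 _ _ ab) !(@npairs0 (a - 1)) ?(@npairs0 (a - 1 - 1)); try lia.
  by rewrite !npairsS /prev_sum /=; ring.
Qed.

Lemma prev_sum_nonmeet_form_diag_corr L (a : int) :
  prev_sum (nonmeet_form L) a a = once_corr L.+1 a a - npairs L.+1 a a.
Proof.
case: L => [|L]; last first.
  by rewrite prev_sum_nonmeet_form_diag /= /npairs /lgv !binzS; ring.
rewrite /prev_sum /= /npairs !binzS !binz0.
by case: (a =P 0); case: (a - 1 =P 0); case: (a - 1 - 1 =P 0) => /=; lia.
Qed.

Definition once_form L (a b : int) : int :=
  nonmeet_form L a b - npairs L a b + once_corr L a b.

Lemma once_formS L (a b : int) :
  a != b -> once_form L.+1 a b = prev_sum (once_form L) a b.
Proof.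
by move=> ab; rewrite /once_form nonmeet_formS // once_corrS // npairsS /prev_sum; ring.
Qed.

Fixpoint bool_seqs (L : nat) : seq (seq bool) :=
  if L is L'.+1 then [seq rcons s x | s <- bool_seqs L', x <- [:: false; true]]
  else [:: [::]].

Lemma mem_bool_seqs L s : (s \in bool_seqs L) = (size s == L).
Proof.
elim: L s => [|L IH] s; first by case: s.
apply/allpairsP/idP => [[[s' x] [/= s'_in _ ->]] | /eqP].
  by rewrite size_rcons eqSS -IH.
case/lastP: s => [//|s' x]; rewrite size_rcons => -[size_s'].
by exists (s', x); split; [rewrite /= IH size_s' | case: x |].
Qed.

Lemma bool_seqs_uniq L : uniq (bool_seqs L).
Proof.
elim: L => [//|L IH]; apply: allpairs_uniq => // [[s x] [t y]] _ _ /=.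
by case/rcons_inj => -> ->.
Qed.

(* Counts the i in 1..size s with v_i(s) = v_i(t): the common start is
   excluded, the endpoint is included when the endpoints agree. *)
Definition meets (s t : seq bool) : nat :=
  count (fun i => count id (take i s) == count id (take i t)) (iota 1 (size s)).

Lemma meets_rcons s t x y : size s = size t ->
  meets (rcons s x) (rcons t y) =
    (meets s t + (count id (rcons s x) == count id (rcons t y)))%N.
Proof.
move=> st; rewrite /meets size_rcons -[(size s).+1]addn1 iotaD count_cat /= addn0 add1n.
rewrite !take_oversize ?size_rcons -?st //; congr (_ + _)%N.
apply: eq_in_count => i; rewrite mem_iota => /andP[_ i_lt].
by rewrite -!cats1 !takel_cat //; lia.
Qed.

Definition pair_count (k L : nat) (a b : int) : nat :=
  \sum_(s <- bool_seqs L) \sum_(t <- bool_seqs L)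
     [&& (count id s)%:Z == a, (count id t)%:Z == b & meets s t == k].

Lemma pair_count_rcons s t (x y : bool) k (a b : int) : size s = size t ->
  [&& (count id (rcons s x))%:Z == a, (count id (rcons t y))%:Z == b
    & meets (rcons s x) (rcons t y) == k] =
  [&& (count id s)%:Z == a - (x : nat)%:Z, (count id t)%:Z == b - (y : nat)%:Z
    & (if a == b then (meets s t).+1 == k else meets s t == k)].
Proof.
move=> st; rewrite meets_rcons // -!cats1 !count_cat /= !addn0.
have -> : ((count id s + x)%:Z == a) = ((count id s)%:Z == a - (x : nat)%:Z).
  by apply/eqP/eqP; case: x; lia.
have -> : ((count id t + y)%:Z == b) = ((count id t)%:Z == b - (y : nat)%:Z).
  by apply/eqP/eqP; case: y; lia.
case: eqP => //= sa; case: eqP => //= tb.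
suff -> : (count id s + x == count id t + y)%N = (a == b).
  by case: (a == b); rewrite ?addn1 ?addn0.
by apply/eqP/eqP; move: sa tb; case: x; case: y; lia.
Qed.

Lemma pair_countS k L (a b : int) : pair_count k L.+1 a b =
  (\sum_(x <- [:: false; true]) \sum_(y <- [:: false; true])
   \sum_(s <- bool_seqs L) \sum_(t <- bool_seqs L)
     [&& (count id s)%:Z == (a - (x : nat)%:Z)%R,
         (count id t)%:Z == (b - (y : nat)%:Z)%R
       & if a == b then (meets s t).+1 == k else meets s t == k])%N.
Proof.
rewrite /pair_count big_allpairs_dep exchange_big; apply: eq_bigr => x _.
rewrite [RHS]exchange_big big_seq_cond [RHS]big_seq_cond.
apply: eq_bigr => s /andP[s_in _].
rewrite big_allpairs_dep exchange_big; apply: eq_bigr => y _.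
rewrite big_seq_cond [RHS]big_seq_cond; apply: eq_bigr => t /andP[t_in _].
rewrite pair_count_rcons //.
by move: s_in t_in; rewrite !mem_bool_seqs => /eqP -> /eqP ->.
Qed.

Lemma pair_count_offdiag k L (a b : int) : a != b ->
  (pair_count k L.+1 a b)%:Z = prev_sum (fun a b => (pair_count k L a b)%:Z) a b.
Proof.
move=> ab; rewrite pair_countS (negbTE ab) !big_cons !big_nil /prev_sum /pair_count.
by rewrite !addn0 !PoszD !subr0; ring.
Qed.

Lemma pair_count_diag k L (a : int) :
  (pair_count k.+1 L.+1 a a)%:Z = prev_sum (fun a b => (pair_count k L a b)%:Z) a a.
Proof.
rewrite pair_countS eqxx !big_cons !big_nil /prev_sum /pair_count.
by rewrite !addn0 !PoszD !subr0; ring.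
Qed.

Lemma pair_count0_diag L (a : int) : pair_count 0 L.+1 a a = 0%N.
Proof.
rewrite pair_countS eqxx; do 4 (apply: big1 => ? _).
by rewrite !andbF.
Qed.

Lemma pair_count0 L (a b : int) : (pair_count 0 L a b)%:Z = nonmeet_form L a b.
Proof.
elim: L a b => [|L IH] a b.
  rewrite /pair_count /= !big_cons !big_nil /meets /= !addn0 andbT.
  by rewrite [0%Z == a]eq_sym [0%Z == b]eq_sym; case: (_ && _).
have [-> | ab] := eqVneq a b; first by rewrite pair_count0_diag nonmeet_form_diag.
by rewrite pair_count_offdiag // nonmeet_formS // /prev_sum !IH.
Qed.

Lemma pair_count1 L (a b : int) : (pair_count 1 L a b)%:Z = once_form L a b.
Proof.
elim: L a b => [|L IH] a b.
  rewrite /pair_count /= !big_cons !big_nil /once_form /= /npairs !binz0.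
  rewrite /meets /= !andbF /=.
  by case: (a == 0); case: (b == 0); rewrite /= ?mulr0 ?mul0r ?mulr1.
have [-> | ab] := eqVneq a b; last first.
  by rewrite pair_count_offdiag // once_formS // /prev_sum !IH.
rewrite pair_count_diag /once_form nonmeet_form_diag.
have -> : prev_sum (fun a b => (pair_count 0 L a b)%:Z) b b =
          prev_sum (nonmeet_form L) b b.
  by rewrite /prev_sum !pair_count0.
by rewrite prev_sum_nonmeet_form_diag_corr; ring.
Qed.

Lemma pair_count1_diag L (a : int) :
  (pair_count 1 L.+2 a a)%:Z = 2 * lgv L a (a - 1).
Proof.
by rewrite pair_count_diag -prev_sum_nonmeet_form_diag /prev_sum !pair_count0.
Qed.

Lemma pair_count2_diag L (a : int) :
  pair_count 2 L.+3 a a = (2 * pair_count 1 L.+3 a a)%N.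
Proof.
apply/eqP; rewrite -eqz_nat; apply/eqP; rewrite PoszM !pair_count_diag.
have -> : prev_sum (fun a b => (pair_count 1 L.+2 a b)%:Z) a a =
          prev_sum (nonmeet_form L.+2) a a - prev_sum (npairs L.+2) a a
          + prev_sum (once_corr L.+2) a a.
  by rewrite /prev_sum !pair_count1 /once_form; ring.
have -> : prev_sum (fun a b => (pair_count 0 L.+2 a b)%:Z) a a =
          prev_sum (nonmeet_form L.+2) a a by rewrite /prev_sum !pair_count0.
by rewrite -npairsS -once_corrSSS prev_sum_nonmeet_form_diag_corr; ring.
Qed.

Lemma count_take_leq (s : seq bool) i : (count id (take i s) <= i)%N.
Proof. by apply: leq_trans (count_size _ _) _; rewrite size_take_min geq_minl. Qed.

Lemma vertex_inj s : injective (vertex s).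
Proof.
move=> i j [ci_cj i_j]; have := count_take_leq s i; have := count_take_leq s j; lia.
Qed.

Lemma inner_vertexE n r (P Q : seq bool) i :
  size P = n -> size Q = n -> count id P = r -> (0 < i < n)%N ->
  (vertex P i \in vertices Q) && (vertex P i != (0, 0)%N)
    && (vertex P i != (r, n - r)%N) = (count id (take i P) == count id (take i Q)).
Proof.
move=> sP sQ cP /andP[i_gt0 i_lt_n].
have := count_take_leq P i; have : (r <= n)%N by rewrite -cP -sP count_size.
move=> r_le_n cPi.
have -> : vertex P i != (0, 0)%N by apply/eqP => -[]; lia.
have -> : vertex P i != (r, n - r)%N by apply/eqP => -[]; lia.
rewrite !andbT; apply/mapP/eqP => [[j _ [cPQ ij]] | cPQ].
  have cQj := count_take_leq Q j; have ji : (j = i :> nat) by lia.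
  by rewrite cPQ ji.
by exists i; rewrite /vertex ?cPQ // mem_iota sQ; lia.
Qed.

Lemma meets_common_inner n r (P Q : seq bool) :
  size P = n.+1 -> size Q = n.+1 -> count id P = r -> count id Q = r ->
  meets P Q = (common_inner n.+1 r P Q).+1.
Proof.
move=> sP sQ cP cQ.
have iota1 : iota 1 n.+1 = iota 1 n ++ [:: n.+1].
  by have := iotaD 1 n 1; rewrite addn1 add1n.
rewrite /common_inner /vertices filter_map undup_id; last first.
  by rewrite map_inj_uniq; [exact/filter_uniq/iota_uniq | exact: vertex_inj].
rewrite size_map size_filter sP (iotaD 0 1 n.+1) /meets sP iota1 !count_cat.
set inner := preim _ _; set same := fun i => _ == _.
have -> : count inner (iota 0 1) = 0%N by rewrite /= /inner /= /vertex take0 andbF.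
have -> : count inner [:: n.+1] = 0%N.
  by rewrite /= /inner /= /vertex take_oversize ?sP ?cP // eqxx !andbF.
have -> : count same [:: n.+1] = 1%N.
  by rewrite /= /same !take_oversize ?sP ?sQ // cP cQ eqxx.
rewrite add0n addn0 addn1; congr _.+1.
apply: eq_in_count => i; rewrite mem_iota => /andP[i_gt0 i_le_n].
by rewrite /inner /= inner_vertexE //; lia.
Qed.

Lemma sum_tuples L (F : seq bool -> nat) :
  (\sum_(t : L.-tuple bool) F t = \sum_(s <- bool_seqs L) F s)%N.
Proof.
rewrite -(big_map (@tval L bool) xpredT F); apply/perm_big/uniq_perm.
- by rewrite map_inj_uniq ?index_enum_uniq //; exact: val_inj.
- exact: bool_seqs_uniq.
move=> s; rewrite mem_bool_seqs; apply/mapP/idP => [[t _ ->] | size_s].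
  by rewrite size_tuple.
by exists (Tuple size_s); rewrite ?mem_index_enum.
Qed.

Lemma Nk_pair_count k n r : Nk k n.+1 r = pair_count k.+1 n.+1 r r.
Proof.
pose F (s t : seq bool) : nat :=
  [&& count id s == r, count id t == r & common_inner n.+1 r s t == k].
rewrite /Nk cardsE -sum1_card big_mkcond /=.
transitivity (\sum_(P : n.+1.-tuple bool) \sum_(Q : n.+1.-tuple bool) F P Q)%N.
  rewrite pair_bigA; apply: eq_bigr => -[P Q] _.
  by rewrite /F unfold_in; case: (_ && _).
transitivity (\sum_(s <- bool_seqs n.+1) \sum_(Q : n.+1.-tuple bool) F s Q)%N.
  exact: (sum_tuples _ (fun s => \sum_(Q : n.+1.-tuple bool) F s Q)%N).
apply: eq_big_seq => s; rewrite mem_bool_seqs => /eqP size_s; rewrite sum_tuples.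
apply: eq_big_seq => t; rewrite mem_bool_seqs => /eqP size_t; rewrite /F !eqz_nat.
case: (count id s =P r) => //= cs; case: (count id t =P r) => //= ct.
by rewrite (meets_common_inner _ _ _ _ size_s size_t cs ct).
Qed.

Lemma Nk0_narayana n r : (2 <= n)%N -> (r <= n)%N ->
  ((Nk 0 n r)%:R : rat) =
    2%:R / (n.-1)%:R * ('C(n.-1, r))%:R * ('C(n.-1, n - r))%:R.
Proof.
case: n => [|[|m]] // _ r_le /=.
have N0 : (m.+1 * Nk 0 m.+2 r = 2 * 'C(m.+1, r) * 'C(m.+1, m.+2 - r))%N.
  apply/eqP; rewrite -eqz_nat !PoszM Nk_pair_count pair_count1_diag.
  rewrite bin_sub_binz // -binz_nat.
  by rewrite -natz mulrCA lgv_narayana mulrA.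
have := congr1 (fun k => k%:R : rat) N0; rewrite /= !natrM => N0r.
have m1_neq0 : m.+1%:R != 0 :> rat by rewrite pnatr_eq0.
by apply: (mulfI m1_neq0); rewrite N0r; field; rewrite addrC natr1.
Qed.

Lemma Nk1_double n r : (3 <= n)%N -> Nk 1 n r = (2 * Nk 0 n r)%N.
Proof. by case: n => [|[|[|m]]] // _; rewrite !Nk_pair_count pair_count2_diag. Qed.

Theorem mainTheorem5 (n r : nat) (hn : (3 <= n)%N) (hr : (r <= n)%N) :
  ((Nk 0 n r)%:R : rat) =
    2%:R / (n.-1)%:R * ('C(n.-1, r))%:R * ('C(n.-1, n - r))%:R
  /\ Nk 1 n r = (2 * Nk 0 n r)%N.
Proof. by split; [apply: Nk0_narayana; lia | exact: Nk1_double]. Qed.
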